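(* Let $X$ be a finite alphabet, $c\geq1$, $x,y\in X$ letters and $w\in X^c$. Then the sequence $(x,y,w)$ is a code if and only if $x\neq y$ and $w\notin\{x,y\}^c$ (i.e. $w$ contains at least one letter different from both $x$ and $y$).
   Context: $X^*$ is the set of words over the finite alphabet $X$, and $\{x,y\}^c$ is the set of words of length $c$ all of whose letters lie in $\{x,y\}$. A code over $X$ is a finite sequence $C=(v_1,\ldots,v_m)$ of words over $X$ such that every $w\in X^*$ has at most one factorization into code-words: if $w=v_{i_1}\cdots v_{i_l}=v_{j_1}\cdots v_{j_{l'}}$ with $l,l'\geq1$, then $l=l'$ and $i_t=j_t$ for all $t$. (Codes are sequences, not sets.) *)

From mathcomp Require Import all_boot.
Set Implicit Arguments. Unset Strict Implicit. Unset Printing Implicit Defensive.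

(* A code is a finite sequence C = (v_1,...,v_m) of words (a [seq (seq X)],
   indices 0..m-1) such that every word has at most one factorization:
   for nonempty index sequences ix, jx (indices < size C), if the
   concatenations of the corresponding code-words coincide then ix = jx
   (which includes equal length and equal indices). *)
Definition factor (X : Type) (C : seq (seq X)) (ix : seq nat) : seq X :=
  flatten [seq nth [::] C i | i <- ix].

Definition is_code (X : eqType) (C : seq (seq X)) : Prop :=
  forall ix jx : seq nat,
    ix != [::] -> jx != [::] ->
    all (fun i => i < size C) ix -> all (fun j => j < size C) jx ->
    factor C ix = factor C jx -> ix = jx.

From mathcomp Require Import all_boot.

(* Necessity: if x = y then [0] and [1] factor the same word; if every letter
   of w is x or y, spelling w letter by letter gives a second factorization
   of the code-word w itself.

   Sufficiency rests on a periodicity fact about words: if u ++ w ++ r' and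
   w ++ r coincide with u nonempty and every letter of u in a set P, then
   every letter of w is in P ([all_shifted_prefix]).  Iterating it along a
   factorization ([all_prefix_of_concat]) shows that no factorization starting
   with the letter x or y can also start with w.  Since x <> y, two
   factorizations of the same word therefore begin with the same code-word;
   cancelling it and inducting gives uniqueness ([factor_unique]). *)

(* Words as seen through a nonempty prefix u: a word w which reappears right
   after u inside w ++ r has all its letters among those allowed for u, since
   each letter of w equals either a letter of u or an earlier letter of w. *)
Lemma all_shifted_prefix (T : Type) (P : pred T) (u w r r' : seq T) :
  0 < size u -> all P u -> u ++ w ++ r' = w ++ r -> all P w.
Proof.
move=> u_gt0 Pu E.
suff Ptake k : k <= size w -> all P (take k w) by rewrite -(take_size w) Ptake.
elim/ltn_ind: k => k IH le_k_w.
rewrite -(takel_cat r le_k_w) -E take_cat.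
case: ltnP => [_ | le_u_k].
  by move: Pu; rewrite -{1}(cat_take_drop k u) all_cat => /andP[].
have le_shift_w : k - size u <= size w := leq_trans (leq_subr _ _) le_k_w.
rewrite all_cat Pu takel_cat // IH // ltn_subrL u_gt0.
exact: leq_trans u_gt0 le_u_k.
Qed.

(* If a word starting with a nonempty P-word u followed by a concatenation of
   pieces, each equal to w or a P-word, also starts with w, then w is a
   P-word: walk along the pieces until the first copy of w. *)
Lemma all_prefix_of_concat (T : eqType) (P : pred T) (w r : seq T)
    (ws : seq (seq T)) (u : seq T) :
  all (fun v => (v == w) || all P v) ws ->
  0 < size u -> all P u -> u ++ flatten ws = w ++ r -> all P w.
Proof.
elim: ws u => [|v ws IH] u /=.
  move=> _ _ Pu; rewrite cats0 => E.
  by move: Pu; rewrite E all_cat => /andP[].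
case/andP=> /orP[/eqP-> | Pv] Pws u_gt0 Pu E.
  exact: all_shifted_prefix u_gt0 Pu E.
apply: (IH (u ++ v)) => //; first by rewrite size_cat (leq_trans u_gt0) ?leq_addr.
  by rewrite all_cat Pu.
by rewrite -catA.
Qed.

Section TwoLettersAndAWord.

Variables (X : eqType) (x y : X) (w : seq X).

Let C : seq (seq X) := [:: [:: x]; [:: y]; w].

Let in_xy (a : X) : bool := (a == x) || (a == y).

Lemma factor_cons (i : nat) (ix : seq nat) :
  factor C (i :: ix) = nth [::] C i ++ factor C ix.
Proof. by []. Qed.

Lemma codeword_w_or_xy (j : nat) :
  j < 3 -> (nth [::] C j == w) || all in_xy (nth [::] C j).
Proof. by case: j => [|[|[|j]]] //= _; rewrite /in_xy eqxx ?orbT. Qed.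

Definition letter_index (a : X) : nat := if a == x then 0 else 1.

Lemma factor_letter_indices (s : seq X) :
  all in_xy s -> factor C (map letter_index s) = s.
Proof.
elim: s => [//|a s IH] /= /andP[a_xy Ps].
rewrite factor_cons IH // /letter_index.
by case: eqP => [-> //| /eqP a_x]; move: a_xy; rewrite /in_xy (negbTE a_x) => /eqP->.
Qed.

(* Necessity of x <> y: otherwise [0] and [1] both factor the word x. *)
Lemma code_letters_distinct : is_code C -> x != y.
Proof.
move=> codeC; apply/eqP => xy.
by have := codeC [:: 0] [:: 1] isT isT isT isT; rewrite /factor /= xy => /(_ erefl).
Qed.

(* Necessity of a letter outside {x, y}: otherwise w factors both as [2]
   and as its letter-by-letter spelling, which avoids the index 2. *)
Lemma code_word_not_over_xy : w != [::] -> is_code C -> ~ all in_xy w.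
Proof.
move=> w_nil codeC w_xy.
have spell := factor_letter_indices w w_xy.
have spell_nil : map letter_index w != [::] by case: (w) w_nil.
have spell_idx : all (fun j => j < size C) (map letter_index w).
  by rewrite all_map; apply/allP => a _ /=; rewrite /letter_index; case: eqP.
have := codeC [:: 2] _ isT spell_nil isT spell_idx.
rewrite spell /factor /= cats0 => /(_ erefl) same.
have : 2 \in map letter_index w by rewrite -same mem_head.
by case/mapP=> a _; rewrite /letter_index; case: eqP.
Qed.

Hypotheses (x_neq_y : x != y) (w_nil : w != [::]) (w_not_xy : ~~ all in_xy w).

Lemma factor_cons_nonempty (j : nat) (jx : seq nat) :
  j < 3 -> factor C (j :: jx) != [::].
Proof.
case: j => [|[|[|j]]] // _; rewrite factor_cons //=.
by rewrite -size_eq0 size_cat addn_eq0 size_eq0 (negbTE w_nil).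
Qed.

Lemma letter_not_w_prefix (i : nat) (ix jx : seq nat) :
  i < 2 -> all (fun j => j < 3) ix ->
  nth [::] C i ++ factor C ix = w ++ factor C jx -> False.
Proof.
move=> lt_i_2 ix_idx E; move/negP: w_not_xy; apply.
apply: all_prefix_of_concat E.
- by rewrite all_map; apply/allP => j /(allP ix_idx); apply: codeword_w_or_xy.
- by case: i lt_i_2 => [|[|i]].
- by case: i lt_i_2 => [|[|i]] //= _; rewrite /in_xy eqxx ?orbT.
Qed.

Lemma first_codeword_eq (i j : nat) (ix jx : seq nat) :
  i < 3 -> j < 3 -> all (fun k => k < 3) ix -> all (fun k => k < 3) jx ->
  nth [::] C i ++ factor C ix = nth [::] C j ++ factor C jx -> i = j.
Proof.
move=> + + ix_idx jx_idx E.
case: i E => [|[|[|i]]]; case: j => [|[|[|j]]] //= E _ _.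
- by case: E => xy; move: x_neq_y; rewrite xy eqxx.
- by case: (letter_not_w_prefix 0 ix jx isT ix_idx E).
- by case: E => xy; move: x_neq_y; rewrite xy eqxx.
- by case: (letter_not_w_prefix 1 ix jx isT ix_idx E).
- by case: (letter_not_w_prefix 0 jx ix isT jx_idx (esym E)).
- by case: (letter_not_w_prefix 1 jx ix isT jx_idx (esym E)).
Qed.

(* Uniqueness of factorizations: cancel the common first code-word. *)
Lemma factor_unique (ix jx : seq nat) :
  all (fun k => k < 3) ix -> all (fun k => k < 3) jx ->
  factor C ix = factor C jx -> ix = jx.
Proof.
elim: ix jx => [|i ix IH] [|j jx] //=.
- by move=> _ /andP[j_idx _] E; move: (factor_cons_nonempty j jx j_idx); rewrite -E.
- by move=> /andP[i_idx _] _ E; move: (factor_cons_nonempty i ix i_idx); rewrite E.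
move=> /andP[i_idx ix_idx] /andP[j_idx jx_idx]; rewrite !factor_cons => E.
have ij : i = j by apply: first_codeword_eq E.
subst j.
by rewrite (IH jx) //; move/(congr1 (drop (size (nth [::] C i)))): E; rewrite !drop_size_cat.
Qed.

End TwoLettersAndAWord.

Theorem mainTheorem7 (X : finType) (c : nat) (x y : X) (w : seq X) :
  1 <= c -> size w = c ->
  (is_code [:: [:: x]; [:: y]; w] <->
   (x != y /\ ~ (all (fun a => (a == x) || (a == y)) w))).
Proof.
move=> c_gt0 size_w.
have w_nil : w != [::] by rewrite -size_eq0 size_w -lt0n.
split=> [codeC | [x_neq_y w_not_xy]].
  split; first exact: (code_letters_distinct _ x y w codeC).
  exact: (code_word_not_over_xy _ x y w w_nil codeC).
move=> ix jx _ _ ix_idx jx_idx.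
by apply: factor_unique => //; apply/negP.
Qed.
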